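(* Let $Y$ be the Springer fibre, i.e. the variety of full flags $F_1\subset F_2\subset\dots\subset F_n=V$ ($\dim F_i=i$) with $NF_i\subset F_{i-1}$ for all $i$ (where $F_0=\{0\}$). (a) Let $I\subset\{1,\dots,n-1\}$, write $\{1,\dots,n\}\setminus I=\{j_1<\dots<j_r\}$ (so $j_r=n$), and let $U\subset Y$ be a subspace of type $I$. Then $N F_{j_l}\subset F_{j_{l-1}}$ for all $l=1,\dots,r$ (with $F_{j_0}:=\{0\}$) and every flag $(F_1\subset\dots\subset F_n)\in U$. (b) If $U\subset Y$ is a subspace of type $I$, then $I$ contains no two consecutive integers.
   Context: Fix integers $n\ge 2k\ge 0$. Let $V$ be an $n$-dimensional complex vector space with ordered basis $e_1,\dots,e_{n-k},f_1,\dots,f_k$ and $N:V\to V$ the nilpotent endomorphism with $Ne_i=e_{i-1}$, $Nf_i=f_{i-1}$, $e_0=f_0=0$ (Jordan type $(n-k,k)$). For $I\subset\{1,\dots,n-1\}$, a subspace of type $I$ is a set of full flags in $V$ of the form $\{(F_1\subset\dots\subset F_n): \dim F_i=i,\ F_j=G_j \text{ for all } j\in\{1,\dots,n\}\setminus I\}$ for some fixed subspaces $G_j$ (i.e. the $F_j$ with $j\notin I$ are fixed and those with $j\in I$ range over all possibilities). *)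

From HB Require Import structures.
From mathcomp Require Import all_boot all_order all_algebra.
Set Implicit Arguments. Unset Strict Implicit. Unset Printing Implicit Defensive.
Import GRing.Theory Num.Theory.
Local Open Scope ring_scope.

(* V = 'rV[C]_n, coordinates 0..n-1 correspond to the ordered basis
   e_1,...,e_{n-k}, f_1,...,f_k  (e_i ~ index i-1, f_i ~ index n-k+i-1).
   Vectors are rows, N acts by v |-> v *m Nmx. *)
Definition Nmx (C : fieldType) (n k : nat) : 'M[C]_n :=
  \matrix_(p < n, q < n) ((((q : nat).+1 == p) && ((p : nat) != (n - k)%N)) %:R : C).

Definition Nend (C : fieldType) (n k : nat) : 'End('rV[C]_n) :=
  linfun (fun v : 'rV[C]_n => v *m Nmx C n k).

Definition is_flag (C : fieldType) (n : nat) (F : nat -> {vspace 'rV[C]_n}) : Prop :=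
  (forall i, (i <= n)%N -> \dim (F i) = i) /\
  (forall i, (i < n)%N -> (F i <= F i.+1)%VS).

Definition springer (C : fieldType) (n k : nat) (F : nat -> {vspace 'rV[C]_n}) : Prop :=
  is_flag F /\ (forall i, (1 <= i <= n)%N -> (Nend C n k @: F i <= F i.-1)%VS).

Definition subspace_of_type (C : fieldType) (n : nat) (I : pred nat)
    (U : (nat -> {vspace 'rV[C]_n}) -> Prop) : Prop :=
  exists G : nat -> {vspace 'rV[C]_n},
    (forall F, U F <-> (is_flag F /\
        forall j, (1 <= j <= n)%N -> ~~ I j -> F j = G j)) /\
    (exists F, U F).

(* j_1 < ... < j_r : the elements of {1..n} \ I, in increasing order;
   jseq = [:: 0; j_1; ...; j_r] so that nth 0 jseq l = j_l with j_0 := 0. *)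
Definition jseq (n : nat) (I : pred nat) : seq nat :=
  0%N :: [seq j <- iota 1 n | ~~ I j].

Arguments springer C n k F : clear implicits.
Arguments subspace_of_type C n I U : clear implicits.
Arguments is_flag C n F : clear implicits.

From HB Require Import structures.
From mathcomp Require Import all_boot all_order all_algebra.
From mathcomp Require Import zify.
Set Implicit Arguments. Unset Strict Implicit. Unset Printing Implicit Defensive.
Import Order.TTheory GRing.Theory Num.Theory.
Local Open Scope ring_scope.

(* Fix F in U and m+1 in I.  Replacing F_{m+1} by another subspace strictly
   between F_m and F_{m+2} yields another flag of U, and the two choices of
   F_{m+1} meet in F_m.  Hence an inclusion N F_b <= F_{m+1} (b <> m+1) valid on
   all of U descends to N F_b <= F_m; running down a block j_{l-1} < i < j_l of
   indices in I gives (a).  If i, i+1 are both in I, they lie in one such block,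
   so j_l - j_{l-1} >= 3; but N maps F_{j_l} into F_{j_{l-1}}, so this gap is at
   most dim ker N <= 2, since N has only the two Jordan blocks. *)

Lemma other_intermediate_vspace (K : fieldType) (vT : vectType K)
    (A B D : {vspace vT}) :
  (A <= B <= D)%VS -> \dim D = (\dim B).+1 ->
  exists W : {vspace vT},
    [/\ (A <= W <= D)%VS, \dim W = (\dim A).+1 & (B :&: W = A)%VS].
Proof.
move=> /andP[sAB sBD] dimD.
have /subvPn[y yD yNB] : ~~ (D <= B)%VS.
  by apply/negP => /dimvS; rewrite dimD ltnn.
have yNA : y \notin A by apply: contra yNB; apply: subvP.
pose W := (A + <[y]>)%VS.
have sAW : (A <= W)%VS := addvSl A <[y]>.
have yW : y \in W := subvP (addvSr A <[y]>) y (memv_line y).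
have dimW : \dim W = (\dim A).+1.
  apply/eqP; rewrite eqn_leq; apply/andP; split.
    apply: leq_trans (leq_of_leqif (dimv_add_leqif A <[y]>)) _.
    by rewrite dim_vline -addn1 leq_add2l leq_b1.
  rewrite (ltn_leqif (dimv_leqif_eq sAW)).
  by apply: contra yNA => /eqP ->.
exists W; split=> //.
  by rewrite sAW subv_add (subv_trans sAB sBD) -memvE.
apply/eqP; rewrite eq_sym eqEdim subv_cap sAB sAW /= -ltnS -dimW.
rewrite (ltn_leqif (dimv_leqif_eq (capvSr B W))).
by apply: contra yNB => /eqP capBW; move: yW; rewrite -capBW memv_cap => /andP[].
Qed.

Definition set_flag (C : fieldType) (n : nat) (F : nat -> {vspace 'rV[C]_n})
    (j : nat) (W : {vspace 'rV[C]_n}) : nat -> {vspace 'rV[C]_n} :=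
  fun i => if i == j then W else F i.

Lemma is_flag_set (C : fieldType) n (F : nat -> {vspace 'rV[C]_n}) m W :
  is_flag C n F -> (F m <= W <= F m.+2)%VS -> \dim W = m.+1 ->
  is_flag C n (set_flag F m.+1 W).
Proof.
move=> [dimF sF] /andP[sFW sWF] dimW; rewrite /set_flag.
split=> [i le_in | i lt_in]; first by case: eqP => [-> | _]; last exact: dimF.
case: eqP => [-> | _]; first by rewrite gtn_eqF.
by case: eqP => [[->] | _]; last exact: sF.
Qed.

Lemma is_flag_set_other (C : fieldType) n (F : nat -> {vspace 'rV[C]_n}) m :
  is_flag C n F -> (m.+2 <= n)%N ->
  exists W, is_flag C n (set_flag F m.+1 W) /\ (F m.+1 :&: W = F m)%VS.
Proof.
move=> flagF lt_m2n; have [dimF sF] := flagF.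
have [||W [sFWF dimW capW]] := @other_intermediate_vspace _ _ (F m) (F m.+1) (F m.+2).
- by rewrite !sF //; lia.
- by rewrite !dimF //; lia.
by exists W; split=> //; apply: is_flag_set; rewrite // dimW dimF //; lia.
Qed.

Section SubspaceOfType.

Variables (C : fieldType) (n k : nat) (I : pred nat).
Variable U : (nat -> {vspace 'rV[C]_n}) -> Prop.
Hypothesis typeU : subspace_of_type C n I U.

Let N := Nend C n k.

Lemma subspace_of_type_set F j W :
  U F -> I j -> is_flag C n (set_flag F j W) -> U (set_flag F j W).
Proof.
have [G [memU _]] := typeU.
move=> /memU[_ FG] Ij flagFW; apply/memU; split=> // i le1in NIi.
by rewrite /set_flag ifN ?FG //; apply: contraNneq NIi => ->.
Qed.

Lemma Nend_sub_descend b m : I m.+1 -> (m.+2 <= n)%N -> b != m.+1 ->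
  (forall F, U F -> (N @: F b <= F m.+1)%VS) ->
  forall F, U F -> (N @: F b <= F m)%VS.
Proof.
move=> Im1 lt_m2n ne_bm1 NFb F UF.
have [G [memU _]] := typeU.
have [W [flagFW capW]] := is_flag_set_other (proj1 ((memU F).1 UF)) lt_m2n.
have UFW := subspace_of_type_set UF Im1 flagFW.
have := NFb _ UFW; rewrite /set_flag eqxx ifN // => sNW.
by rewrite -capW subv_cap NFb.
Qed.

Hypothesis springerU : forall F, U F -> springer C n k F.

Lemma Nend_sub_gap a b : (1 <= b <= n)%N -> (a < b)%N ->
  (forall i, (a < i < b)%N -> I i) ->
  forall F, U F -> (N @: F b <= F a)%VS.
Proof.
move=> le1bn lt_ab Igap.
suff sub_m d m : (m + d.+1 = b)%N -> (a <= m)%N -> forall F, U F -> (N @: F b <= F m)%VS.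
  by apply: (sub_m (b - a).-1); lia.
elim: d m => [|d IHd] m def_b le_am F UF.
  by have := (springerU UF).2 b le1bn; rewrite -def_b addn1.
apply: Nend_sub_descend F UF; rewrite ?Igap //; try lia.
by apply: IHd; lia.
Qed.

End SubspaceOfType.

Section NilpotentKernel.

Variables (C : fieldType) (n k : nat).

Lemma Nend_row_coord (v : 'rV[C]_n) (p q : 'I_n) :
  p = q.+1 :> nat -> p != (n - k)%N :> nat -> (Nend C n k v) 0 q = v 0 p.
Proof.
move=> def_p ne_pk; rewrite /Nend (lfunE (mulmxr (Nmx C n k))) /= mxE.
rewrite (bigD1 p) //= mxE def_p eqxx -def_p ne_pk mulr1 big1 ?addr0 // => p' ne_p'p.
by rewrite mxE -def_p val_eqE eq_sym (negbTE ne_p'p) mulr0.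
Qed.

Lemma lker_Nend_coord (v : 'rV[C]_n) (p : 'I_n) :
  v \in lker (Nend C n k) -> p != 0 :> nat -> p != (n - k)%N :> nat -> v 0 p = 0.
Proof.
rewrite memv_ker => /eqP Nv0 p_neq0 ne_pk.
have lt_pn : (p.-1 < n)%N by apply: leq_ltn_trans (leq_pred p) (ltn_ord p).
by rewrite -(@Nend_row_coord v p (Ordinal lt_pn)) ?Nv0 ?mxE //= prednK // lt0n.
Qed.

Lemma dim_lker_Nend : (\dim (lker (Nend C n k)) <= 2)%N.
Proof.
pose e j : 'rV[C]_n := \row_(q < n) ((q == j :> nat)%:R).
have e_delta (p : 'I_n) : 'e_p = e p by apply/rowP => q; rewrite !mxE.
have sub_lker : (lker (Nend C n k) <= <[e 0%N]> + <[e (n - k)%N]>)%VS.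
  apply/subvP => v kerv; rewrite [v]row_sum_delta.
  rewrite (bigID (fun p : 'I_n => (p == 0 :> nat) || (p == (n - k)%N :> nat))) /=.
  rewrite [X in _ + X]big1 ?addr0 => [|p]; last first.
    by rewrite negb_or => /andP[p0 pk]; rewrite lker_Nend_coord // scale0r.
  apply: memv_suml => p /orP[] /eqP def_p; apply: memvZ; rewrite e_delta def_p.
    exact: subvP (addvSl _ _) _ (memv_line _).
  exact: subvP (addvSr _ _) _ (memv_line _).
apply: leq_trans (dimvS sub_lker) _.
apply: leq_trans (leq_of_leqif (dimv_add_leqif _ _)) _.
by rewrite !dim_vline -[2%N]/(1 + 1)%N leq_add ?leq_b1.
Qed.

End NilpotentKernel.

Lemma dimv_leq_img_lker (K : fieldType) (aT rT : vectType K) (f : 'Hom(aT, rT))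
    (A : {vspace aT}) (B : {vspace rT}) :
  (f @: A <= B)%VS -> (\dim A <= \dim B + \dim (lker f))%N.
Proof.
by move=> sfAB; rewrite -(limg_ker_dim f A) addnC leq_add ?dimvS ?capvSr.
Qed.

Section Jseq.

Variables (n : nat) (I : pred nat).

Lemma mem_jseq x : (x \in jseq n I) = (x == 0%N) || (1 <= x <= n)%N && ~~ I x.
Proof. by rewrite inE mem_filter mem_iota andbC add1n ltnS. Qed.

Lemma jseq_sorted : sorted ltn (jseq n I).
Proof.
apply: (subseq_sorted ltn_trans _ (iota_ltn_sorted 0 n.+1)).
by rewrite /jseq /= filter_subseq.
Qed.

Lemma jseq_gap l : (1 <= l < size (jseq n I))%N ->
  let a := nth 0%N (jseq n I) l.-1 in let b := nth 0%N (jseq n I) l in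
  [/\ (a < b)%N, (1 <= b <= n)%N & forall i, (a < i < b)%N -> I i].
Proof.
move=> /andP[lt0l lt_l] a b.
have mono_nth : {in [pred j | (j < size (jseq n I))%N] &,
    {mono nth 0%N (jseq n I) : j j' / (j < j')%N}}.
  by apply: lt_sorted_ltn_nth; apply: jseq_sorted.
have lt_ab : (a < b)%N by rewrite /a /b mono_nth ?inE ?prednK //; lia.
have := mem_nth 0%N lt_l; rewrite mem_jseq -/b => /orP[/eqP b0 | /andP[le1bn _]].
  by rewrite b0 in lt_ab.
split=> // i /andP[lt_ai lt_ib]; apply/negPn/negP => NIi.
have i_in : i \in jseq n I by rewrite mem_jseq NIi andbT; apply/orP; right; lia.
have lt_pl : (index i (jseq n I) < size (jseq n I))%N by rewrite index_mem.
move: lt_ai lt_ib; rewrite -(nth_index 0%N i_in) /a /b !mono_nth ?inE //; lia.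
Qed.

Lemma jseq_around i : ~~ I n -> (i < n)%N -> i \notin jseq n I ->
  exists2 l, (1 <= l < size (jseq n I))%N &
    (nth 0%N (jseq n I) l.-1 < i < nth 0%N (jseq n I) l)%N.
Proof.
move=> NIn lt_in Nji; set s := jseq n I; set l := find (fun x => i < x)%N s.
have has_gt : has (fun x => i < x)%N s.
  by apply/hasP; exists n; rewrite // mem_jseq NIn leqnn andbT; apply/orP; right; lia.
have lt_ls : (l < size s)%N by rewrite -has_find.
have gt_l := nth_find 0%N has_gt; rewrite -/l in gt_l.
have lt0l : (0 < l)%N by move: gt_l; case: (l).
exists l; first by rewrite lt0l.
rewrite gt_l andbT ltn_neqAle; apply/andP; split.
  apply: contraNneq Nji => <-; apply: mem_nth.
  exact: leq_ltn_trans (leq_pred l) lt_ls.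
by rewrite leqNgt; apply/negbT/before_find; rewrite prednK.
Qed.

End Jseq.

Unset Implicit Arguments.

Theorem lemma3p7 (C : numClosedFieldType) (n k : nat) (hk : (2 * k <= n)%N)
    (I : pred nat) (HI : forall i, I i -> (1 <= i <= n.-1)%N)
    (U : (nat -> {vspace 'rV[C]_n}) -> Prop)
    (HUY : forall F, U F -> springer C n k F)
    (HU : subspace_of_type C n I U) :
  (forall F, U F -> forall l, (1 <= l < size (jseq n I))%N ->
      (Nend C n k @: F (nth 0%N (jseq n I) l) <= F (nth 0%N (jseq n I) l.-1))%VS)
  /\ ~ (exists i, I i /\ I i.+1).
Proof.
have partA F : U F -> forall l, (1 <= l < size (jseq n I))%N ->
    (Nend C n k @: F (nth 0%N (jseq n I) l) <= F (nth 0%N (jseq n I) l.-1))%VS.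
  move=> UF l /jseq_gap[lt_ab le1bn Igap].
  exact: Nend_sub_gap HU HUY _ _ le1bn lt_ab Igap F UF.
split=> // -[i [Ii Ii1]].
have [_ [_ [F UF]]] := HU.
have notin_jseq j : I j -> j \notin jseq n I.
  by move=> Ij; rewrite mem_jseq Ij andbF orbF; have := HI j Ij; lia.
have NIn : ~~ I n by apply/negP => /HI; lia.
have [|l lt_l /andP[lt_ai lt_ib]] := jseq_around NIn _ (notin_jseq i Ii).
  by have := HI i.+1 Ii1; lia.
have [_ le1bn _] := jseq_gap lt_l.
have ne_bi1 : nth 0%N (jseq n I) l != i.+1.
  by apply: contraNneq (notin_jseq _ Ii1) => <-; apply: mem_nth; case/andP: lt_l.
have := dimv_leq_img_lker (partA F UF l lt_l).
have [[dimF _] _] := HUY F UF.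
rewrite !dimF; try lia.
by have := dim_lker_Nend C n k; lia.
Qed.
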